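(* Let $G=(V,E,w)$ be an undirected graph without self-loops, with $n\ge 2$ vertices, positive edge weights and conductance $\Phi_G$. Then every optimal HC tree $\mathcal{T}^*$ of $G$ (equivalently, $\mathsf{OPT}_G$) satisfies \[ \mathrm{cost}_G(\mathcal{T}^* ) \ge \frac{2\Phi_G}{9}\cdot \max\left\{\frac{\mathrm{vol}(G)^2}{d_{\max}},\; d_{\min}\cdot n^2\right\} = \frac{2\Phi_G}{9}\cdot n\cdot \mathrm{vol}(G)\cdot \max\left\{\frac{d_{\mathrm{avg}}}{d_{\max}},\frac{d_{\min}}{d_{\mathrm{avg}}}\right\}. \]
   Context: $d_u=\sum_{v} w_{uv}$; $d_{\min},d_{\max}$ are the minimum and maximum degree, and $d_{\mathrm{avg}}=\sum_u d_u/n$. $\mathrm{vol}(S)=\sum_{u\in S}d_u$, $\mathrm{vol}(G)=\mathrm{vol}(V)$. For $S\subseteq V$, $w(S,T)$ is the total weight of edges between $S$ and $T$; the conductance of nonempty $S$ is $\Phi_G(S)=w(S,V\setminus S)/\mathrm{vol}(S)$, and $\Phi_G=\min\{\Phi_G(S): \emptyset\ne S\subset V,\ \mathrm{vol}(S)\le \mathrm{vol}(V)/2\}$. An HC tree of $G$ is a rooted binary tree whose leaves are in bijection with $V$; internal nodes are identified with the vertex sets of their leaves; $u\vee v$ is the lowest common ancestor. $\mathrm{cost}_G(\mathcal{T})=\sum_{\{u,v\}\in E}w_{uv}|\mathsf{leaves}(\mathcal{T}[u\vee v])|$, and $\mathsf{OPT}_G=\min_{\mathcal{T}}\mathrm{cost}_G(\mathcal{T})$.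 *)

From HB Require Import structures.
From mathcomp Require Import all_boot all_order all_algebra.
Set Implicit Arguments. Unset Strict Implicit. Unset Printing Implicit Defensive.
Import Order.TTheory GRing.Theory Num.Theory.
Local Open Scope ring_scope.

(* A weighted undirected graph on a finite vertex type V is given by a
   weight function w : V -> V -> R; {u,v} is an edge iff w u v > 0. *)

Section Graph.
Variables (R : realFieldType) (V : finType) (w : V -> V -> R).

Definition wgraph : Prop :=
  [/\ forall u v, w u v = w v u,
      forall u, w u u = 0
    & forall u v, 0 <= w u v].

Definition deg (u : V) : R := \sum_(v : V) w u v.
Definition vol (S : {set V}) : R := \sum_(u in S) deg u.
Definition volG : R := vol [set: V].
Definition wcut (S T : {set V}) : R := \sum_(u in S) \sum_(v in T) w u v.

(* d_max (degrees are nonnegative, so 0 is a harmless unit) *)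
Definition dmax : R := \big[Order.max/0]_(u : V) deg u.
(* d_min (dmax bounds all degrees, so it is a harmless unit) *)
Definition dmin : R := \big[Order.min/dmax]_(u : V) deg u.
Definition davg : R := volG / #|V|%:R.

Definition cond_set (S : {set V}) : R := wcut S (~: S) / vol S.
Definition admissible (S : {set V}) : bool :=
  [&& S != set0, S != [set: V] & vol S <= volG / 2].
(* Phi_G = min over admissible S of cond_set S; every cond_set S <= 1 and the
   admissible family is nonempty for n >= 2, so 1 is a harmless unit. *)
Definition conductance : R := \big[Order.min/1]_(S | admissible S) cond_set S.

End Graph.

Inductive hctree (T : Type) := Leaf of T | Node of hctree T & hctree T.
Arguments Leaf {T}. Arguments Node {T}.

Fixpoint leaves (T : Type) (t : hctree T) : seq T :=
  match t with Leaf x => [:: x] | Node l r => leaves l ++ leaves r end.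

Definition is_hctree (V : finType) (t : hctree V) : bool :=
  perm_eq (leaves t) (enum V).

(* |leaves(T[u \/ v])|: number of leaves below the lowest common ancestor *)
Fixpoint lca_size (V : eqType) (t : hctree V) (u v : V) : nat :=
  match t with
  | Leaf _ => 1
  | Node l r =>
      if (u \in leaves l) && (v \in leaves l) then lca_size l u v
      else if (u \in leaves r) && (v \in leaves r) then lca_size r u v
      else size (leaves l) + size (leaves r)
  end%N.

(* cost_G(T) = sum over edges {u,v} of w_uv |leaves(T[u \/ v])|;
   each unordered pair is counted twice in the double sum (w u u = 0). *)
Definition hc_cost (R : realFieldType) (V : finType) (w : V -> V -> R)
  (t : hctree V) : R :=
  2^-1 * \sum_(u : V) \sum_(v : V) w u v * (lca_size t u v)%:R.

From HB Require Import structures.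
From mathcomp Require Import all_boot all_order all_algebra.
From mathcomp Require Import zify ring lra.
Set Implicit Arguments. Unset Strict Implicit. Unset Printing Implicit Defensive.
Import Order.TTheory GRing.Theory Num.Theory.
Local Open Scope ring_scope.

(* For k >= 1, split an HC tree into its maximal subtrees with at most k
   leaves, the level-k clusters.  An edge {u,v} separated by the level-k
   clustering has more than k leaves below u \/ v, so its cost weight is at
   least 1 plus the number of levels 1..K that separate it.  If every set S of
   at most K vertices satisfies w(S, V\S) >= Phi * sum_(u in S) m u, adding the
   boundaries of all clusters over the K levels gives
   2 cost(T) >= vol(G) + K Phi sum_u m u.
   With m = deg and K the largest integer with K d_max <= vol(G)/2, small sets
   have volume at most vol(G)/2; with m = d_min and K = n/2, a small set or its
   complement does.  The two choices give the two terms of the maximum. *)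

Lemma size_leaves_gt0 (T : Type) (t : hctree T) : (0 < size (leaves t))%N.
Proof. by elim: t => [x|l IHl r IHr] //=; rewrite size_cat addn_gt0 IHl. Qed.

Lemma lca_size_gt0 (T : eqType) (t : hctree T) u v : (0 < lca_size t u v)%N.
Proof.
elim: t => [x|l IHl r IHr] //=.
by do 2 case: ifP => _ //; rewrite addn_gt0 size_leaves_gt0.
Qed.

Lemma uniq_cat_memNl (T : eqType) (s1 s2 : seq T) x :
  uniq (s1 ++ s2) -> x \in s2 -> (x \in s1) = false.
Proof. by rewrite cat_uniq => /and3P [_ /hasPn dis _] /dis /negbTE. Qed.

(* The leaves of the highest subtree containing [u] with at most [k] leaves
   (the leaf [u] alone when k = 0). *)
Fixpoint cluster (T : eqType) (k : nat) (u : T) (t : hctree T) : seq T :=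
  match t with
  | Leaf x => [:: x]
  | Node l r => if (size (leaves l ++ leaves r) <= k)%N then leaves l ++ leaves r
                else if u \in leaves l then cluster k u l else cluster k u r
  end.

Lemma lca_size_gt_cluster (T : eqType) k (t : hctree T) u v :
  uniq (leaves t) -> u \in leaves t -> v \in leaves t -> v \notin cluster k u t ->
  (k < lca_size t u v)%N.
Proof.
elim: t => [x|l IHl r IHr] /=; first by move=> _ _ ->.
move=> /[dup] ut; rewrite cat_uniq => /and3P [ul _ ur] hu hv.
case: ifP => hs; first by rewrite hv.
case: ifP => hul.
  case: ifP => hvl; first exact: IHl.
  case: ifP => [/andP[/(uniq_cat_memNl ut)]|_]; first by rewrite hul.
  by rewrite -size_cat ltnNge hs.
have hur : u \in leaves r by move: hu; rewrite mem_cat hul.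
rewrite hur /=; case: ifP => hvr; last by rewrite -size_cat ltnNge hs.
by move=> v_out; apply: IHr => //; move: hv; rewrite mem_cat hvr orbF.
Qed.

Lemma sum_nat_lt K s : (\sum_(1 <= k < K.+1) (k < s) = minn K s.-1)%N.
Proof.
by elim: K => [|K IH]; [rewrite big_nil | rewrite big_nat_recr //= IH]; lia.
Qed.

Lemma lca_size_ge_separating (T : eqType) (t : hctree T) K u v :
  uniq (leaves t) -> u \in leaves t -> v \in leaves t ->
  (1 + \sum_(1 <= k < K.+1) (v \notin cluster k u t) <= lca_size t u v)%N.
Proof.
move=> ut ut' vt.
apply: (@leq_trans (1 + \sum_(1 <= k < K.+1) (k < lca_size t u v))).
  rewrite leq_add2l; apply: leq_sum => k _.
  by case: (boolP (v \notin _)) => //= /(lca_size_gt_cluster ut ut' vt) ->.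
by rewrite sum_nat_lt; have := lca_size_gt0 t u v; lia.
Qed.

Section SmallSetExpansion.
Variables (R : realFieldType) (V : finType) (w : V -> V -> R) (m : V -> R).
Variables (Phi : R) (k : nat).
Hypothesis expand : forall S : {set V}, S != set0 -> (#|S| <= k)%N ->
  Phi * \sum_(u in S) m u <= wcut w S (~: S).

Lemma expand_seq (s : seq V) : uniq s -> (0 < size s <= k)%N ->
  Phi * \sum_(u <- s) m u <= \sum_(u <- s) \sum_v w u v * (v \notin s)%:R.
Proof.
move=> us /andP [s_gt0 s_le].
have sE : s =i [set x | x \in s] by move=> x; rewrite inE.
rewrite !big_uniq // !(eq_bigl _ _ sE).
have -> : \sum_(u in [set x | x \in s]) \sum_v w u v * (v \notin s)%:R
          = wcut w [set x | x \in s] (~: [set x | x \in s]).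
  apply: eq_bigr => u _; rewrite [RHS]big_mkcond; apply: eq_bigr => v _.
  by rewrite !inE; case: (v \in s); rewrite ?mulr0 ?mulr1.
have card_s : #|[set x | x \in s]| = size s by rewrite cardsE (card_uniqP us).
by apply: expand; rewrite -?card_gt0 card_s.
Qed.

Hypothesis k_gt0 : (0 < k)%N.

Lemma expand_clusters (t : hctree V) : uniq (leaves t) ->
  Phi * \sum_(u <- leaves t) m u
    <= \sum_(u <- leaves t) \sum_v w u v * (v \notin cluster k u t)%:R.
Proof.
elim: t => [x|l IHl r IHr] /= ut.
  by apply: expand_seq => //=; rewrite k_gt0.
case hs: (size (leaves l ++ leaves r) <= k)%N.
  by apply: expand_seq; rewrite // hs size_cat addn_gt0 size_leaves_gt0.
move: (ut); rewrite cat_uniq => /and3P [ul _ ur].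
rewrite !big_cat /= mulrDr; apply: lerD.
  rewrite [X in _ <= X](eq_big_seq (fun u => \sum_v w u v * (v \notin cluster k u l)%:R)).
    exact: IHl.
  by move=> u ->.
rewrite [X in _ <= X](eq_big_seq (fun u => \sum_v w u v * (v \notin cluster k u r)%:R)).
  exact: IHr.
by move=> u /(uniq_cat_memNl ut) ->.
Qed.

End SmallSetExpansion.

Lemma lca_weight_sum_ge (R : realFieldType) (V : finType) (w : V -> V -> R)
    (m : V -> R) (Phi : R) (t : hctree V) (K : nat) :
  is_hctree t -> (forall u v, 0 <= w u v) ->
  (forall S : {set V}, S != set0 -> (#|S| <= K)%N ->
     Phi * \sum_(u in S) m u <= wcut w S (~: S)) ->
  \sum_u \sum_v w u v + K%:R * (Phi * \sum_u m u)
    <= \sum_u \sum_v w u v * (lca_size t u v)%:R.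
Proof.
move=> tV w_ge0 expand.
have ut : uniq (leaves t) by rewrite (perm_uniq tV) enum_uniq.
have tT x : x \in leaves t by rewrite (perm_mem tV) mem_enum.
have sum_leaves (F : V -> R) : \sum_(u <- leaves t) F u = \sum_u F u.
  by rewrite big_uniq //; apply: eq_bigl => x; rewrite tT.
pose cut k u v : R := (v \notin cluster k u t)%:R.
have levels : K%:R * (Phi * \sum_u m u)
    <= \sum_(1 <= k < K.+1) \sum_u \sum_v w u v * cut k u v.
  have -> : K%:R * (Phi * \sum_u m u) = \sum_(1 <= k < K.+1) (Phi * \sum_u m u).
    by rewrite sumr_const_nat subn1 mulr_natl.
  apply: ler_sum_nat => k /andP [k_gt0 k_le]; rewrite -!sum_leaves.
  by apply: expand_clusters => // S S0 Sk; apply: expand => //; apply: leq_trans Sk _.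
apply: (le_trans (lerD (lexx _) levels)).
rewrite [X in _ + X]exchange_big /=.
under [X in _ + X]eq_bigr => u _ do rewrite exchange_big /=.
rewrite -big_split /=; apply: ler_sum => u _.
rewrite -big_split /=; apply: ler_sum => v _.
rewrite -mulr_sumr -[X in X + _]mulr1 -mulrDr ler_wpM2l //.
by rewrite -natr_sum addrC natr1 ler_nat -add1n lca_size_ge_separating.
Qed.

Lemma exists_nat_bracket (R : realFieldType) (v d : R) (n : nat) :
  0 <= d -> 0 <= v -> v <= n%:R * d ->
  exists K : nat, K%:R * d <= v / 2 /\ v <= 2 * (K%:R + 1) * d.
Proof.
move=> d_ge0 v_ge0 v_le.
pose P k := (k <= n)%N && (k%:R * d <= v / 2).
have P0 : P 0%N by rewrite /P mul0r divr_ge0.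
have P_le k : P k -> (k <= n)%N by case/andP.
have [K /andP [K_le Kd] K_max] := ex_maxnP (ex_intro P 0%N P0) P_le.
exists K; split=> //.
have [K_lt|n_le] := ltnP K n; last first.
  have -> : K = n by apply/eqP; rewrite eqn_leq K_le.
  have n_ge0 : 0 <= (n%:R : R) by [].
  nra.
have : ~~ P K.+1 by apply/negP => /K_max; rewrite ltnn.
by rewrite /P K_lt andTb -ltNge -[K.+1]addn1 natrD; lra.
Qed.

Lemma level_bound_arith (R : realFieldType) (Phi v M B X : R) (K : nat) :
  0 <= Phi <= 1 -> 0 <= M <= v -> v + K%:R * (Phi * M) <= X ->
  B <= 2 * (K%:R + 1) * M -> 2 * Phi / 9 * B <= 2^-1 * X.
Proof.
move=> /andP [Phi_ge0 Phi_le1] /andP [M_ge0 M_le] X_ge B_le.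
have c_ge0 : 0 <= 2 * Phi / 9 by rewrite divr_ge0 // mulr_ge0.
apply: (le_trans (ler_wpM2l c_ge0 B_le)).
have K_ge0 : 0 <= (K%:R : R) by [].
have PM_le : Phi * M <= M by nra.
have KPM_ge0 : 0 <= K%:R * (Phi * M) by rewrite !mulr_ge0.
have -> : 2 * Phi / 9 * (2 * (K%:R + 1) * M) = 4 / 9 * (K%:R * (Phi * M) + Phi * M).
  by ring.
lra.
Qed.

Lemma max_vol_card_davg (R : realFieldType) (n v dmx dmn : R) :
  0 < n -> 0 <= dmn -> n * dmn <= v -> v <= n * dmx ->
  Num.max (v ^+ 2 / dmx) (dmn * n ^+ 2) = n * v * Num.max (v / n / dmx) (dmn / (v / n)).
Proof.
move=> n_gt0 dmn_ge0 low up.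
have [v0|v_neq0] := eqVneq v 0.
  have -> : dmn = 0 by apply/eqP; rewrite eq_le dmn_ge0 -(pmulr_rle0 _ n_gt0) -v0 low.
  by rewrite v0 !(mul0r, mulr0, expr0n) /= maxxx.
have v_gt0 : 0 < v by rewrite lt0r v_neq0 (le_trans _ low) // mulr_ge0 // ltW.
have dmx_neq0 : dmx != 0 by apply/eqP => d0; rewrite d0 mulr0 in up; lra.
have n_neq0 : n != 0 by rewrite gt_eqF.
rewrite maxr_pMr ?mulr_ge0 ?ltW //; congr Num.max; field.
  by rewrite dmx_neq0 n_neq0.
by rewrite v_neq0 n_neq0.
Qed.

Section WeightedGraph.
Variables (R : realFieldType) (V : finType) (w : V -> V -> R).
Hypothesis hw : wgraph w.

Let w_sym u v : w u v = w v u. Proof. by case: hw. Qed.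
Let w_ge0 u v : 0 <= w u v. Proof. by case: hw. Qed.

Lemma deg_ge0 u : 0 <= deg w u. Proof. exact: sumr_ge0. Qed.

Lemma vol_ge0 (S : {set V}) : 0 <= vol w S.
Proof. by apply: sumr_ge0 => u _; apply: deg_ge0. Qed.

Lemma wcut_ge0 (S T : {set V}) : 0 <= wcut w S T.
Proof. by apply: sumr_ge0 => u _; apply: sumr_ge0. Qed.

Lemma wcut_le_vol (S T : {set V}) : wcut w S T <= vol w S.
Proof. by apply: ler_sum => u _; rewrite /deg [leRHS](bigID (mem T)) lerDl sumr_ge0. Qed.

Lemma wcut_setC (S : {set V}) : wcut w (~: S) S = wcut w S (~: S).
Proof.
rewrite /wcut exchange_big; apply: eq_bigr => u _; apply: eq_bigr => v _.
exact: w_sym.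
Qed.

Lemma volG_sum : volG w = \sum_u \sum_v w u v.
Proof. by apply: eq_bigl => x; rewrite inE. Qed.

Lemma vol_setC (S : {set V}) : vol w S + vol w (~: S) = volG w.
Proof. by rewrite /volG /vol [in RHS](big_setID S) setTI setTD. Qed.

Lemma dmax_ge0 : 0 <= dmax w.
Proof.
by apply: (big_ind (>= 0)) => // [x y /= x_ge0 _|u _]; rewrite ?le_max ?x_ge0 ?deg_ge0.
Qed.

Lemma dmin_ge0 : 0 <= dmin w.
Proof.
apply: (big_ind (>= 0)) => [|x y /= ? ?|u _]; rewrite ?le_min ?dmax_ge0 ?deg_ge0 //.
exact/andP.
Qed.

Lemma vol_le_card_dmax (S : {set V}) : vol w S <= #|S|%:R * dmax w.
Proof.
by rewrite mulr_natl -sumr_const; apply: ler_sum => u _; apply: le_bigmax.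
Qed.

Lemma card_dmin_le_vol (S : {set V}) : #|S|%:R * dmin w <= vol w S.
Proof.
by rewrite mulr_natl -sumr_const; apply: ler_sum => u _; apply: bigmin_le.
Qed.

Lemma cond_set_ge0 (S : {set V}) : 0 <= cond_set w S.
Proof. by rewrite divr_ge0 ?wcut_ge0 ?vol_ge0. Qed.

Lemma cond_set_le1 (S : {set V}) : cond_set w S <= 1.
Proof.
have [v0|v_neq0] := eqVneq (vol w S) 0; first by rewrite /cond_set v0 invr0 mulr0.
by rewrite ler_pdivrMr ?lt0r ?v_neq0 ?vol_ge0 // mul1r wcut_le_vol.
Qed.

Lemma conductance_ge0 : 0 <= conductance w.
Proof.
apply: (big_ind (>= 0)) => // [x y /= ? ?|S _]; rewrite ?le_min ?cond_set_ge0 //.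
exact/andP.
Qed.

Lemma conductance_le1 : conductance w <= 1.
Proof.
apply: (big_ind (fun x => x <= 1)) => // [x y /= x_le1 _|S _].
  by rewrite ge_min x_le1.
exact: cond_set_le1.
Qed.

Lemma conductance_vol_le_wcut (S : {set V}) : vol w S <= volG w / 2 ->
  conductance w * vol w S <= wcut w S (~: S).
Proof.
move=> small.
have [->|v_neq0] := eqVneq (vol w S) 0; first by rewrite mulr0 wcut_ge0.
have v_gt0 : 0 < vol w S by rewrite lt0r v_neq0 vol_ge0.
have adm : admissible w S.
  rewrite /admissible small andbT; apply/andP; split.
    by apply: contra v_neq0 => /eqP ->; rewrite /vol big_set0.
  apply: contra_neq v_neq0 => SV; move: small; rewrite SV -/(volG w).
  have := vol_ge0 [set: V]; rewrite -/(volG w); lra.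
by rewrite -ler_pdivlMr //; apply: bigmin_le_cond.
Qed.

Lemma conductance_card_dmin_le_wcut (S : {set V}) : (#|S|.*2 <= #|V|)%N ->
  conductance w * (#|S|%:R * dmin w) <= wcut w S (~: S).
Proof.
move=> S_small.
have [S_vol|S_vol] := lerP (vol w S) (volG w / 2).
  apply: le_trans (conductance_vol_le_wcut S_vol).
  by rewrite ler_wpM2l ?conductance_ge0 ?card_dmin_le_vol.
have SC_vol : vol w (~: S) <= volG w / 2 by have := vol_setC S; lra.
rewrite -wcut_setC; have := conductance_vol_le_wcut SC_vol; rewrite setCK.
apply: le_trans.
rewrite ler_wpM2l ?conductance_ge0 // (le_trans _ (card_dmin_le_vol _)) //.
rewrite ler_wpM2r ?dmin_ge0 //.
by rewrite ler_nat; have := cardsC S; lia.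
Qed.

Lemma hc_cost_ge_levels (t : hctree V) (m : V -> R) (K : nat) (B : R) :
  is_hctree t ->
  (forall S : {set V}, S != set0 -> (#|S| <= K)%N ->
     conductance w * \sum_(u in S) m u <= wcut w S (~: S)) ->
  0 <= \sum_u m u <= volG w -> B <= 2 * (K%:R + 1) * \sum_u m u ->
  2 * conductance w / 9 * B <= hc_cost w t.
Proof.
move=> tV expand m_bounds B_le.
apply: level_bound_arith m_bounds _ B_le.
  by rewrite conductance_ge0 conductance_le1.
by rewrite volG_sum; apply: lca_weight_sum_ge.
Qed.

Lemma hc_cost_ge_vol_dmax (t : hctree V) : is_hctree t ->
  2 * conductance w / 9 * (volG w ^+ 2 / dmax w) <= hc_cost w t.
Proof.
move=> tV.
have dmax_ge0 := dmax_ge0.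
have volG_ge0 : 0 <= volG w := vol_ge0 _.
have volG_le : volG w <= #|V|%:R * dmax w by rewrite -cardsT vol_le_card_dmax.
have [K [KD_le volG_le']] := exists_nat_bracket dmax_ge0 volG_ge0 volG_le.
have degE : \sum_u deg w u = volG w by apply: eq_bigl => u; rewrite inE.
apply: (hc_cost_ge_levels (m := deg w) (K := K)) => //.
- move=> S _ S_le; apply: conductance_vol_le_wcut => //.
  apply: le_trans (vol_le_card_dmax S) (le_trans _ KD_le).
  by rewrite ler_wpM2r // ler_nat.
- by rewrite degE volG_ge0 lexx.
have [->|dmax_neq0] := eqVneq (dmax w) 0.
  by rewrite invr0 mulr0 degE !mulr_ge0 ?addr_ge0.
rewrite degE ler_pdivrMr ?lt0r ?dmax_neq0 //; nra.
Qed.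

Lemma hc_cost_ge_dmin_card (t : hctree V) : is_hctree t ->
  2 * conductance w / 9 * (dmin w * #|V|%:R ^+ 2) <= hc_cost w t.
Proof.
move=> tV.
have dmin_ge0 := dmin_ge0.
have minE : \sum_(u : V) dmin w = #|V|%:R * dmin w by rewrite sumr_const mulr_natl.
apply: (hc_cost_ge_levels (m := fun=> dmin w) (K := #|V|./2)) => //.
- move=> S _ S_le; rewrite sumr_const -mulr_natl.
  by apply: conductance_card_dmin_le_wcut; rewrite -geq_half_double.
- by rewrite minE mulr_ge0 //= -cardsT card_dmin_le_vol.
have n_le : (#|V| <= 2 * (#|V|./2 + 1))%N.
  by have := odd_double_half #|V|; rewrite -muln2; have := leq_b1 (odd #|V|); lia.
rewrite minE; move: n_le; rewrite -(ler_nat R) natrM natrD => n_le.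
have := ler_wpM2l (mulr_ge0 (ler0n R #|V|) dmin_ge0) n_le; nra.
Qed.

End WeightedGraph.

Theorem lemma3p2 (R : realFieldType) (V : finType) (w : V -> V -> R)
  (Tstar : hctree V) :
  wgraph w -> (2 <= #|V|)%N ->
  is_hctree Tstar ->
  (forall T : hctree V, is_hctree T -> hc_cost w Tstar <= hc_cost w T) ->
  hc_cost w Tstar >=
    (2 * conductance w / 9) *
      Num.max (volG w ^+ 2 / dmax w) (dmin w * (#|V|%:R) ^+ 2)
  /\
  (2 * conductance w / 9) *
      Num.max (volG w ^+ 2 / dmax w) (dmin w * (#|V|%:R) ^+ 2)
  = (2 * conductance w / 9) * #|V|%:R * volG w *
      Num.max (davg w / dmax w) (dmin w / davg w).
Proof.
move=> hw n_ge2 tV _; split.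
  have c_ge0 : 0 <= 2 * conductance w / 9.
    by rewrite divr_ge0 // mulr_ge0 // conductance_ge0.
  rewrite maxr_pMr // ge_max.
  by rewrite hc_cost_ge_vol_dmax ?hc_cost_ge_dmin_card.
rewrite (@max_vol_card_davg _ _ _ (dmax w)) ?mulrA ?dmin_ge0 //.
- by rewrite ltr0n; apply: leq_trans n_ge2.
- by rewrite -cardsT card_dmin_le_vol.
- by rewrite -cardsT vol_le_card_dmax.
Qed.
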